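(* Let $k,m,n,l$ be positive integers with $nl+ml\le k$ and $q$ a prime power. Let $\mathbb{L}$ be the set of $l$-dimensional subspaces of $\mathbb{F}_q^k$ and let $\mathbb{X}=\{\{L_1,\dots,L_n\}\subseteq\mathbb{L}:\dim(L_1+\cdots+L_n)=nl\}$, $\mathbb{Y}=\{\{L_1,\dots,L_m\}\subseteq\mathbb{L}:\dim(L_1+\cdots+L_m)=ml\}$, $\mathbb{Z}=\{\{L_1,\dots,L_{n+m}\}\subseteq\mathbb{L}:\dim(L_1+\cdots+L_{n+m})=(n+m)l\}$. Let $B$ be the bipartite graph with left vertex set $\mathbb{X}$, right vertex set $\mathbb{Y}$, and $X$ adjacent to $Y$ iff $X\cup Y\in\mathbb{Z}$. Put $P=\prod_{i=0}^{l-1}\binom{l-i}{1}_q$, $y_1=\prod_{i=0}^{n-1}\binom{(n-i)l}{l}$, $y_2=\prod_{i=0}^{m-1}\binom{(m-i)l}{l}$. Then $$|\mathbb{X}|=\frac{(l!)^n q^{\frac{n(n-1)l^2}{2}}}{(nl)!\,n!}\cdot\frac{\prod_{i=0}^{nl-1}\binom{k-i}{1}_q}{P^n}\,y_1,\qquad |\mathbb{Y}|=\frac{(l!)^m q^{\frac{m(m-1)l^2}{2}}}{(ml)!\,m!}\cdot\frac{\prod_{i=0}^{ml-1}\binom{k-i}{1}_q}{P^m}\,y_2,$$ and every $X\in\mathbb{X}$ has exactly $$\frac{(l!)^m q^{ml^2\left(\frac{m-1}{2}+n\right)}}{(ml)!\,m!}\cdot\frac{\prod_{i=0}^{ml-1}\binom{k-nl-i}{1}_q}{P^m}\,y_2$$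 neighbours in $B$.
   Context: $\binom{a}{1}_q=\frac{q^a-1}{q-1}$; $\binom{(n-i)l}{l}$ etc. are ordinary binomial coefficients. *)

From HB Require Import structures.
From mathcomp Require Import all_boot all_order all_algebra all_field.
Set Implicit Arguments. Unset Strict Implicit. Unset Printing Implicit Defensive.
Import Order.TTheory GRing.Theory Num.Theory.

Import VectorInternalTheory.
HB.instance Definition _ (F : finFieldType) (k : nat) :=
  [Finite of {vspace 'rV[F]_k} by <:].

Local Open Scope ring_scope.

(* Gaussian binomial [a choose 1]_q = (q^a - 1)/(q - 1), as a rational. *)
Definition qbin1 (q a : nat) : rat := ((q ^ a)%N%:R - 1) / ((q%:R : rat) - 1).

Section Config.
Variables (F : finFieldType) (k l : nat).

Definition Lsub : {set {vspace 'rV[F]_k}} := [set L | \dim L == l].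

Definition indep_family (n : nat) : {set {set {vspace 'rV[F]_k}}} :=
  [set X : {set {vspace 'rV[F]_k}} |
     [&& X \subset Lsub, #|X| == n & \dim (\sum_(L in X) L)%VS == (n * l)%N]].

Definition Bneighbours (n m : nat) (X : {set {vspace 'rV[F]_k}}) :
    {set {set {vspace 'rV[F]_k}}} :=
  [set Y in indep_family m | X :|: Y \in indep_family (n + m)].
End Config.

From HB Require Import structures.
From mathcomp Require Import all_boot all_order all_algebra all_field.
From mathcomp Require Import zify ring.
Import Order.TTheory GRing.Theory Num.Theory.
Set Implicit Arguments. Unset Strict Implicit. Unset Printing Implicit Defensive.

(* Choosing L_1, ..., L_j one after the other, a subspace L independent of the
   current span W (dim W = d) is the span of an l-tuple of vectors independent
   over W; there are (q^k - q^d) ... (q^k - q^(d+l-1)) such tuples, and each L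
   arises from exactly its (q^l - 1) ... (q^l - q^(l-1)) ordered bases. Forgetting
   the order of the j subspaces divides by j!. A family Y is a neighbour of X
   exactly when it is independent over the span of X, which has dimension nl, so
   the neighbour count is the same count started at d = nl. The closed forms
   follow from q^a - q^b = q^b (q - 1) [a - b]_q and (jl)! = y_j (l!)^j. *)

Lemma card_tuple_cons (T : finType) r (P : pred (r.+1.-tuple T)) :
  #|[set t | P t]| = \sum_(v : T) #|[set t : r.-tuple T | P [tuple of v :: t]]|.
Proof.
rewrite -sum1_card (partition_big (fun t : r.+1.-tuple T => thead t) predT) //=.
apply: eq_bigr => v _; rewrite -sum1_card.
rewrite (reindex_onto (fun t : r.-tuple T => [tuple of v :: t])
   (fun t : r.+1.-tuple T => [tuple of behead t])) /=.
  apply: eq_bigl => t; rewrite !inE theadE eqxx andbT.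
  by case: (P _) => //=; apply/eqP/val_inj.
move=> t /andP[_ /eqP <-]; apply/val_inj => /=.
by case: t => [[|x s] //=].
Qed.

Section IndependentVectors.
Variables (F : finFieldType) (k : nat).
Local Notation vT := 'rV[F]_k.
Local Notation q := #|F|.

Lemma dimv_add_le (U V : {vspace vT}) : (\dim (U + V) <= \dim U + \dim V)%N.
Proof. exact: dimv_add_leqif. Qed.

Lemma dimv_add_line (U : {vspace vT}) v :
  v \notin U -> \dim (U + <[v]>) = (\dim U).+1.
Proof.
move=> vNU; have v_neq0 : v != 0%R by apply: contraNneq vNU => ->; rewrite mem0v.
apply/eqP; rewrite eqn_leq; have := dimv_add_le U <[v]>.
rewrite dim_vline v_neq0 addn1 => -> /=.
have : U != (U + <[v]>)%VS.
  by apply: contraNneq vNU => ->; exact: subvP (addvSr U _) v (memv_line v).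
by rewrite eqEdim addvSl /= -ltnNge.
Qed.

Definition indep_vseq (U : {vspace vT}) (t : seq vT) :=
  \dim (U + <<t>>) == (\dim U + size t)%N.

Lemma indep_vseq_cons U v t :
  indep_vseq U (v :: t) = (v \notin U) && indep_vseq (U + <[v]>) t.
Proof.
rewrite /indep_vseq span_cons addvA /=.
have le_sum := dimv_add_le (U + <[v]>) <<t>>.
have le_span := dim_span t.
have [vU | vNU] /= := boolP (v \in U).
  have -> : (U + <[v]> = U)%VS by apply/addv_idPl; rewrite -memvE.
  apply/negbTE; rewrite neq_ltn.
  apply/orP; left; apply: leq_ltn_trans (dimv_add_le U <<t>>) _.
  by rewrite ltn_add2l ltnS.
by rewrite dimv_add_line // addSnnS.
Qed.

Definition indep_vtuples (U S : {vspace vT}) r :=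
  [set t : r.-tuple vT | all (mem S) t && indep_vseq U t].

Lemma card_vspaceD (U S : {vspace vT}) : (U <= S)%VS ->
  #|[pred v | (v \in S) && (v \notin U)]| = (q ^ \dim S - q ^ \dim U)%N.
Proof.
move=> sUS; rewrite -!card_vspace -(cardID U S).
have -> : #|[predI S & U]| = #|U|.
  by apply: eq_card => v; rewrite !inE andb_idl // => /(subvP sUS).
by rewrite addKn; apply: eq_card => v; rewrite !inE andbC.
Qed.

Lemma card_indep_vtuples (U S : {vspace vT}) r : (U <= S)%VS ->
  #|indep_vtuples U S r| = (\prod_(i < r) (q ^ \dim S - q ^ (\dim U + i)))%N.
Proof.
elim: r U => [|r IH] U sUS.
  suff -> : indep_vtuples U S 0 = setT by rewrite big_ord0 cardsT card_tuple.
  by apply/setP => t; rewrite !inE tuple0 /indep_vseq /= span_nil addv0 addn0 eqxx.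
rewrite /indep_vtuples card_tuple_cons big_ord_recl addn0.
rewrite (bigID [pred v | (v \in S) && (v \notin U)]) /= [X in (_ + X)%N]big1.
- rewrite addn0 (eq_bigr (fun=> \prod_(i < r) (q ^ \dim S - q ^ ((\dim U).+1 + i))))%N.
    rewrite sum_nat_const card_vspaceD //; congr (_ * _)%N.
    by apply: eq_bigr => i _; rewrite /bump add1n addnS.
  move=> v /andP[vS vNU]; rewrite -(dimv_add_line vNU) -IH.
    by apply: eq_card => t; rewrite !inE /= indep_vseq_cons vS vNU.
  by rewrite subv_add sUS -memvE.
- move=> v /negbTE vNSU; apply/eqP; rewrite cards_eq0; apply/eqP/setP => t.
  rewrite !inE /= indep_vseq_cons.
  by apply/and3P => -[/andP[vS _] vNU _]; rewrite vS vNU in vNSU.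
Qed.

Variable l : nat.

Definition Lsub_indep (U : {vspace vT}) :=
  [set L in @Lsub F k l | \dim (U + L) == (\dim U + l)%N].

Lemma span_indep_vtuple_Lsub_indep U (t : l.-tuple vT) :
  indep_vseq U t -> <<t>>%VS \in Lsub_indep U.
Proof.
rewrite /indep_vseq size_tuple !inE => /eqP dimUt; rewrite dimUt eqxx andbT.
have := dim_span t; rewrite size_tuple => le_tl.
have := dimv_add_le U <<t>>; rewrite dimUt leq_add2l => le_lt.
by rewrite eqn_leq le_tl.
Qed.

Lemma card_Lsub_indep U :
  (#|Lsub_indep U| * \prod_(i < l) (q ^ l - q ^ i)
    = \prod_(i < l) (q ^ k - q ^ (\dim U + i)))%N.
Proof.
have := card_indep_vtuples l (subvf U); rewrite dimvf dim_matrix mul1r => <-.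
rewrite -[RHS]sum1_card.
rewrite (partition_big (fun t : l.-tuple vT => <<t>>%VS) (mem (Lsub_indep U))) /=;
  last by move=> t; rewrite inE => /andP[_]; exact: span_indep_vtuple_Lsub_indep.
rewrite -sum_nat_const; apply: eq_bigr => L; rewrite !inE => /andP[/eqP dimL dimUL].
have <- : #|indep_vtuples 0 L l| = (\prod_(i < l) (q ^ l - q ^ i))%N.
  by rewrite card_indep_vtuples ?sub0v // dimv0 dimL.
rewrite -sum1_card; apply: eq_bigl => t; rewrite !inE /indep_vseq.
rewrite add0v dimv0 add0n size_tuple; apply/andP/andP => [[tL /eqP dimt]|[_ /eqP spanL]].
  have -> : <<t>>%VS = L.
    apply/eqP; rewrite eqEdim dimL dimt leqnn andbT.
    by apply/span_subvP => x /(allP tL).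
  by rewrite dimUL andbT; split=> //; apply/allP => x _; exact: memvf.
by rewrite spanL dimL; split=> //; apply/allP => x; rewrite -spanL; exact: memv_span.
Qed.

Definition indep_seq (U : {vspace vT}) (s : seq {vspace vT}) :=
  all (mem (@Lsub F k l)) s
  && (\dim (U + \sum_(L <- s) L) == \dim U + size s * l)%N.

Lemma dimv_sum_Lsub_le (s : seq {vspace vT}) :
  all (mem (@Lsub F k l)) s -> (\dim (\sum_(L <- s) L) <= size s * l)%N.
Proof.
elim: s => [|L s IH] /=; first by rewrite big_nil dimv0.
rewrite inE big_cons mulSn => /andP[/eqP dimL /IH le_s].
by apply: leq_trans (dimv_add_le _ _) _; rewrite dimL leq_add2l.
Qed.

Lemma indep_seq_cons U L s :
  indep_seq U (L :: s) = (L \in Lsub_indep U) && indep_seq (U + L) s.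
Proof.
rewrite /indep_seq /= !inE big_cons addvA mulSn.
have [dimL | //] /= := boolP (\dim L == l).
have [Ls | ] /= := boolP (all _ s); last by rewrite !andbF.
have := dimv_add_le (U + L) (\sum_(L' <- s) L'); have := dimv_sum_Lsub_le Ls.
have := dimv_add_le U L; rewrite (eqP dimL).
move=> ? ? ?; apply/eqP/andP => [dimULs | [/eqP dimUL /eqP dimULs]]; last lia.
by split; apply/eqP; lia.
Qed.

Lemma indep_seq_uniq (l_gt0 : (0 < l)%N) U s : indep_seq U s -> uniq s.
Proof.
elim: s U => [//|L s IH] U; rewrite indep_seq_cons => /andP[LU indep_s] /=.
rewrite (IH _ indep_s) andbT; apply/negP => Ls.
move: LU indep_s; rewrite inE /indep_seq => /andP[_ /eqP ->] /andP[all_s].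
have L_sub : (L <= \sum_(L' <- s) L')%VS by rewrite (big_rem L Ls) addvSl.
rewrite -addvA (addv_idPr L_sub).
have := dimv_add_le U (\sum_(L' <- s) L'); have := dimv_sum_Lsub_le all_s.
by move=> ? ? /eqP; lia.
Qed.

Definition indep_tuples (U : {vspace vT}) j :=
  [set t : j.-tuple {vspace vT} | indep_seq U t].

Lemma card_indep_tuplesS U j :
  #|indep_tuples U j.+1| = (\sum_(L in Lsub_indep U) #|indep_tuples (U + L) j|)%N.
Proof.
rewrite /indep_tuples card_tuple_cons (bigID (mem (Lsub_indep U))) /=.
rewrite [X in (_ + X)%N]big1 ?addn0 => [|L /negbTE LNU]; last first.
  by apply/eqP; rewrite cards_eq0; apply/eqP/setP => t; rewrite !inE indep_seq_cons LNU.
by apply: eq_bigr => L LU; apply: eq_card => t; rewrite !inE indep_seq_cons LU.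
Qed.

Lemma card_indep_tuples U j :
  (#|indep_tuples U j| * (\prod_(i < l) (q ^ l - q ^ i)) ^ j
    = \prod_(i < j * l) (q ^ k - q ^ (\dim U + i)))%N.
Proof.
elim: j U => [|j IH] U.
  suff -> : indep_tuples U 0 = setT by rewrite cardsT card_tuple big_ord0.
  by apply/setP => t; rewrite !inE tuple0 /indep_seq /= big_nil addv0 mul0n addn0 eqxx.
rewrite card_indep_tuplesS big_distrl expnS /=.
rewrite (eq_bigr (fun=> \prod_(i < l) (q ^ l - q ^ i)
                       * \prod_(i < j * l) (q ^ k - q ^ (\dim U + l + i))))%N;
  last by move=> L; rewrite inE => /andP[_ /eqP <-]; rewrite mulnCA IH.
rewrite sum_nat_const mulnA card_Lsub_indep mulSn big_split_ord /=.
by congr (_ * _)%N; apply: eq_bigr => i _; rewrite addnA.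
Qed.

Definition indep_sets (U : {vspace vT}) j :=
  [set X : {set {vspace vT}} | [&& X \subset @Lsub F k l, #|X| == j &
     \dim (U + \sum_(L in X) L) == \dim U + j * l]%N].

Lemma card_indep_tuples_sets (l_gt0 : (0 < l)%N) U j :
  #|indep_tuples U j| = (j`! * #|indep_sets U j|)%N.
Proof.
have sum_set (t : seq {vspace vT}) : uniq t ->
    (\sum_(L in [set L in t]) L = \sum_(L <- t) L)%VS.
  by move=> uniq_t; rewrite big_uniq //; apply: eq_bigl => L; rewrite inE.
have card_set (t : j.-tuple {vspace vT}) : uniq t -> #|[set L in t]| = j.
  by move=> uniq_t; rewrite cardsE (card_uniqP uniq_t) size_tuple.
rewrite -sum1_card (partition_big (fun t : j.-tuple _ => [set L in t])
                                  (mem (indep_sets U j))) /=; last first.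
  move=> t; rewrite !inE => indep_t; have uniq_t := indep_seq_uniq l_gt0 indep_t.
  move: indep_t; rewrite /indep_seq size_tuple -sum_set // => /andP[Lt ->].
  by rewrite card_set ?eqxx ?andbT //; apply/subsetP => L; rewrite inE => /(allP Lt).
rewrite mulnC -sum_nat_const; apply: eq_bigr => X; rewrite inE.
move=> /and3P[XL /eqP cardX /eqP dimX].
have := card_uniq_tuples j (mem X); rewrite cardX ffactnn => <-; rewrite -sum1_card.
apply: eq_bigl => t; rewrite !inE; apply/andP/andP => [[indep_t /eqP <-] | [tX uniq_t]].
  rewrite (indep_seq_uniq l_gt0 indep_t); split=> //.
  by apply/allP => L Lt /=; rewrite inE.
have setX : [set L in t] = X.
  apply/eqP; rewrite eqEcard card_set // cardX leqnn andbT.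
  by apply/subsetP => L; rewrite inE => /(allP tX).
rewrite setX; split=> //; rewrite /indep_seq size_tuple -sum_set // setX dimX eqxx.
by rewrite andbT; apply/allP => L /(allP tX) /(subsetP XL).
Qed.

Lemma indep_familyE j : @indep_family F k l j = indep_sets 0 j.
Proof. by apply/setP => X; rewrite !inE add0v dimv0 add0n. Qed.

Lemma dimv_sum_set_Lsub_le (Y : {set {vspace vT}}) : Y \subset @Lsub F k l ->
  (\dim (\sum_(L in Y) L) <= #|Y| * l)%N.
Proof.
move=> YL; rewrite -big_enum cardE; apply: dimv_sum_Lsub_le.
by apply/allP => L; rewrite mem_enum => /(subsetP YL).
Qed.

Lemma BneighboursE (l_gt0 : (0 < l)%N) n m X : X \in @indep_family F k l n ->
  @Bneighbours F k l n m X = indep_sets (\sum_(L in X) L) m.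
Proof.
rewrite inE => /and3P[XL /eqP cardX /eqP dimX]; apply/setP => Y; rewrite !inE.
rewrite big_setU => [|?]; last exact: addvv.
set W := (\sum_(L in X) L)%VS in dimX *; rewrite dimX mulnDl.
apply/andP/and3P => [[/and3P[-> -> _] /and3P[_ _ ->]] // | [YL /eqP cardY /eqP dimWY]].
have dimY : \dim (\sum_(L in Y) L) = (m * l)%N.
  have := dimv_add_le W (\sum_(L in Y) L); have := dimv_sum_set_Lsub_le YL.
  by rewrite cardY dimX; lia.
(* A common member L of X and Y adds nothing to W, so the m - 1 members of
   Y :\ L would have to raise the dimension by m * l. *)
have disjXY : X :&: Y = set0.
  apply/setP => L; rewrite !inE; apply/negP => /andP[LX LY].
  have YL' : Y :\ L \subset @Lsub F k l := subset_trans (subsetDl Y _) YL.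
  have LW : (L <= W)%VS := sumv_sup L LX (subvv L).
  move: dimWY; rewrite [X in (W + X)%VS](bigD1 L) //= addvA (addv_idPl LW).
  have -> : (\sum_(L' in Y | L' != L) L' = \sum_(L' in Y :\ L) L')%VS.
    by apply: eq_bigl => L'; rewrite !inE andbC.
  have := dimv_add_le W (\sum_(L' in Y :\ L) L'); have := dimv_sum_set_Lsub_le YL'.
  by have := cardsD1 L Y; rewrite LY cardY dimX add1n; nia.
rewrite YL cardY dimY dimWY subUset XL YL cardsU disjXY cards0 cardX cardY subn0.
by rewrite !eqxx.
Qed.

Lemma card_indep_sets (l_gt0 : (0 < l)%N) U j :
  (j`! * #|indep_sets U j| * (\prod_(i < l) (q ^ l - q ^ i)) ^ j
    = \prod_(i < j * l) (q ^ k - q ^ (\dim U + i)))%N.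
Proof. by rewrite -card_indep_tuples_sets // card_indep_tuples. Qed.

End IndependentVectors.

Lemma bin2D a b : 'C(a + b, 2) = ('C(a, 2) + a * b + 'C(b, 2))%N.
Proof.
elim: a => [|a IH]; first by rewrite add0n.
by rewrite addSn !binS !bin1 IH; lia.
Qed.

Lemma bin2_mul j l : 'C(j * l, 2) = (j * 'C(l, 2) + 'C(j, 2) * l ^ 2)%N.
Proof.
elim: j => [|j IH]; first by rewrite !mul0n.
by rewrite mulSn bin2D IH binS bin1; ring.
Qed.

Lemma prod_bin_mul_fact j l :
  ((\prod_(i < j) 'C((j - i) * l, l)) * l`! ^ j = (j * l)`!)%N.
Proof.
elim: j => [|j IH]; first by rewrite big_ord0.
rewrite big_ord_recl subn0 expnS mulnCA -mulnA.
under eq_bigr => i _ do rewrite lift0 subSS.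
transitivity (l`! * 'C(j.+1 * l, l) * (j * l)`!)%N; first by rewrite -IH; ring.
by rewrite mulSn -(bin_fact (leq_addr (j * l) l)) addKn; ring.
Qed.

Section QCount.
Local Open Scope ring_scope.
Variable q : nat.
Hypothesis q_gt1 : (1 < q)%N.
Local Notation Q := (q%:R : rat).

Lemma Q1_neq0 : Q - 1 != 0.
Proof. by rewrite subr_eq0 pnatr_eq1 neq_ltn q_gt1 orbT. Qed.

Lemma qbin1_neq0 a : (0 < a)%N -> qbin1 q a != 0.
Proof.
move=> a_gt0; rewrite mulf_eq0 invr_eq0 negb_or Q1_neq0 andbT.
by rewrite subr_eq0 pnatr_eq1 -(expn0 q) eqn_exp2l // -lt0n.
Qed.

Lemma natr_qdiff a b : (b <= a)%N ->
  ((q ^ a - q ^ b)%N%:R : rat) = Q ^+ b * (Q - 1) * qbin1 q (a - b).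
Proof.
move=> le_ba; rewrite natrB ?leq_pexp2l ?(ltnW q_gt1) //.
rewrite -(subnKC le_ba) expnD addKn /qbin1 !natrM !natrX.
by field; exact: Q1_neq0.
Qed.

Lemma natr_prod_qdiff a d r : (d + r <= a)%N ->
  ((\prod_(i < r) (q ^ a - q ^ (d + i)))%N%:R : rat) =
  Q ^+ (r * d + 'C(r, 2)) * (Q - 1) ^+ r * \prod_(i < r) qbin1 q (a - d - i).
Proof.
move=> le_dra; rewrite natr_prod.
rewrite (eq_bigr (fun i : 'I_r => Q ^+ (d + i) * (Q - 1) * qbin1 q (a - d - i))).
  rewrite !big_split /= prodrXr prodr_const card_ord big_split /=.
  by rewrite sum_nat_const card_ord -bin2_sum big_mkord.
by move=> i _; rewrite natr_qdiff ?subnDA //; have := ltn_ord i; lia.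
Qed.

Lemma natr_prod_qdiff0 r :
  ((\prod_(i < r) (q ^ r - q ^ i))%N%:R : rat)
    = Q ^+ 'C(r, 2) * (Q - 1) ^+ r * \prod_(i < r) qbin1 q (r - i).
Proof.
rewrite (natr_prod_qdiff (a := r) (d := 0)) // muln0 add0n.
by under eq_bigr => i _ do rewrite subn0.
Qed.

Lemma closed_form_count a d j l S : (d + j * l <= a)%N ->
  (j`! * S * (\prod_(i < l) (q ^ l - q ^ i)) ^ j
     = \prod_(i < j * l) (q ^ a - q ^ (d + i)))%N ->
  (S%:R : rat) =
    ((l`! ^ j)%N%:R * (q ^ ('C(j, 2) * l ^ 2 + j * d * l))%N%:R)
      / ((j * l)`! * j`!)%N%:R
    * ((\prod_(i < j * l) qbin1 q (a - d - i))
        / (\prod_(i < l) qbin1 q (l - i)) ^+ j)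
    * (\prod_(i < j) 'C((j - i) * l, l))%N%:R.
Proof.
move=> le_a /(congr1 (fun n => n%:R : rat)).
rewrite natr_prod_qdiff // !natrM natrX natr_prod_qdiff0.
rewrite -(prod_bin_mul_fact j l) bin2_mul.
set P := \prod_(i < l) _; set Pi := \prod_(i < _) _.
set Y := (\prod_(i < j) _)%N.
have P_neq0 : P != 0.
  by apply/prodf_neq0 => i _; apply: qbin1_neq0; rewrite subn_gt0.
have Q_neq0 : Q != 0 by rewrite pnatr_eq0 -lt0n ltnW.
have fact_neq0 n : (n`!)%:R != 0 :> rat by rewrite pnatr_eq0 -lt0n fact_gt0.
have Y_neq0 : Y%:R != 0 :> rat.
  rewrite pnatr_eq0 -lt0n; have := fact_gt0 (j * l).
  by rewrite -(prod_bin_mul_fact j l) muln_gt0 => /andP[].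
have -> : Q ^+ (j * l * d + (j * 'C(l, 2) + 'C(j, 2) * l ^ 2))
    = Q ^+ ('C(j, 2) * l ^ 2 + j * d * l) * (Q ^+ 'C(l, 2)) ^+ j.
  by rewrite -exprM -exprD; congr (_ ^+ _); ring.
have -> : (Q - 1) ^+ (j * l) = ((Q - 1) ^+ l) ^+ j by rewrite mulnC exprM.
rewrite !exprMn !natrM !natrX.
set A := Q ^+ (_ + _); set B := _ ^+ j; set C := _ ^+ j; set D := P ^+ j.
have D_neq0 : D != 0 by rewrite expf_neq0.
have BC_neq0 : B * C != 0 by rewrite mulf_neq0 // !expf_neq0 ?Q1_neq0.
move=> count.
apply: (mulIf (_ : j`!%:R * (B * C * D) != 0)).
  by rewrite mulf_neq0 ?fact_neq0 // mulf_neq0.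
rewrite (_ : S%:R * _ = A * B * C * Pi); last by rewrite -count; ring.
by field; rewrite Y_neq0 D_neq0 fact_neq0 expf_neq0.
Qed.

End QCount.

Local Open Scope ring_scope.

Lemma card_indep_family (F : finFieldType) k l j : (0 < l)%N -> (j * l <= k)%N ->
  (#|@indep_family F k l j|%:R : rat) =
    ((l`! ^ j)%N%:R * (#|F| ^ ('C(j, 2) * l ^ 2))%N%:R) / ((j * l)`! * j`!)%N%:R
    * ((\prod_(i < j * l) qbin1 #|F| (k - i))
        / (\prod_(i < l) qbin1 #|F| (l - i)) ^+ j)
    * (\prod_(i < j) 'C((j - i) * l, l))%N%:R.
Proof.
move=> l_gt0 le_jl_k; rewrite indep_familyE.
have := card_indep_sets l_gt0 (0 : {vspace 'rV[F]_k}) j; rewrite dimv0.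
move/(closed_form_count (finNzRing_gt1 F) (d := 0) le_jl_k) => ->.
rewrite muln0 mul0n addn0.
by under eq_bigr => i _ do rewrite subn0.
Qed.

Lemma card_Bneighbours (F : finFieldType) k l n m X :
    (0 < l)%N -> (n * l + m * l <= k)%N -> X \in @indep_family F k l n ->
  (#|@Bneighbours F k l n m X|%:R : rat) =
    ((l`! ^ m)%N%:R * (#|F| ^ ('C(m, 2) * l ^ 2 + m * n * l ^ 2))%N%:R)
      / ((m * l)`! * m`!)%N%:R
    * ((\prod_(i < m * l) qbin1 #|F| (k - n * l - i))
        / (\prod_(i < l) qbin1 #|F| (l - i)) ^+ m)
    * (\prod_(i < m) 'C((m - i) * l, l))%N%:R.
Proof.
move=> l_gt0 le_k X_n; rewrite BneighboursE //.
have := card_indep_sets l_gt0 (\sum_(L in X) L)%VS m.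
move: X_n; rewrite inE => /and3P[_ _ /eqP ->].
move/(closed_form_count (finNzRing_gt1 F) le_k) => ->.
by rewrite (_ : m * (n * l) * l = m * n * l ^ 2)%N //; ring.
Qed.

Theorem lemma12 (F : finFieldType) (k m n l : nat)
  (hk : (0 < k)%N) (hm : (0 < m)%N) (hn : (0 < n)%N) (hl : (0 < l)%N)
  (hnml : (n * l + m * l <= k)%N) :
  let q := #|F| in
  let P : rat := \prod_(i < l) qbin1 q (l - i) in
  let y1 : rat := (\prod_(i < n) 'C((n - i) * l, l))%N%:R in
  let y2 : rat := (\prod_(i < m) 'C((m - i) * l, l))%N%:R in
  [/\ (#|@indep_family F k l n|%:R : rat) =
        ((l`! ^ n)%N%:R * (q ^ ((n * (n - 1)) %/ 2 * l ^ 2))%N%:R)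
          / ((n * l)`! * n`!)%N%:R
        * ((\prod_(i < n * l) qbin1 q (k - i)) / P ^+ n) * y1,
      (#|@indep_family F k l m|%:R : rat) =
        ((l`! ^ m)%N%:R * (q ^ ((m * (m - 1)) %/ 2 * l ^ 2))%N%:R)
          / ((m * l)`! * m`!)%N%:R
        * ((\prod_(i < m * l) qbin1 q (k - i)) / P ^+ m) * y2
    & forall X, X \in @indep_family F k l n ->
      (#|@Bneighbours F k l n m X|%:R : rat) =
        ((l`! ^ m)%N%:R
           * (q ^ ((m * (m - 1)) %/ 2 * l ^ 2 + m * n * l ^ 2))%N%:R)
          / ((m * l)`! * m`!)%N%:R
        * ((\prod_(i < m * l) qbin1 q (k - n * l - i)) / P ^+ m) * y2].
Proof.
move=> q P y1 y2.
have bin2E j : ((j * (j - 1)) %/ 2 = 'C(j, 2))%N by rewrite bin2 -divn2 subn1.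
rewrite !bin2E; split.
- by apply: card_indep_family => //; lia.
- by apply: card_indep_family => //; lia.
- by move=> X; exact: card_Bneighbours.
Qed.
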